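(* Let $\mathbb{X}$ be a linearly ordered radicable idempotent semifield, $n\ge1$, $\bm{A},\bm{B}\in\mathbb{X}^{n\times n}$ with $\lambda=\bigoplus_{k=1}^{n}(\mathrm{tr}\,\bm{A}^{k})^{1/k}$ the spectral radius of $\bm{A}$ and $\mathrm{Tr}(\bm{B})\le\mathbb{1}$, $\bm{p}\in\mathbb{X}^n$, $\bm{q}\in\mathbb{X}^n$ a regular vector, and $r\in\mathbb{X}$ with $\lambda\oplus(\bm{q}^{-}\bm{p})^{1/2}\oplus r>\mathbb{0}$. Consider minimizing $\bm{x}^{-}\bm{A}\bm{x}\oplus\bm{x}^{-}\bm{p}\oplus\bm{q}^{-}\bm{x}\oplus r$ over regular $\bm{x}\in\mathbb{X}^n$ subject to $\bm{B}\bm{x}\le\bm{x}$. Then the minimum value is $$\theta=\bigoplus_{k=1}^{n}(\mathrm{tr}\,\bm{S}_{k})^{1/k}\oplus\bigoplus_{k=0}^{n-1}(\bm{q}^{-}\bm{T}_{k}\bm{p})^{1/(k+2)}\oplus r,$$ and all regular solutions are exactly the vectors $\bm{x}=(\theta^{-1}\bm{A}\oplus\bm{B})^{\ast}\bm{u}$, where $\bm{u}$ is any vector with $\theta^{-1}\bm{p}\le\bm{u}\le\theta\big(\bm{q}^{-}(\theta^{-1}\bm{A}\oplus\bm{B})^{\ast}\big)^{-}$.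
   Context: An idempotent semifield is $(\mathbb{X},\oplus,\otimes,\mathbb{0},\mathbb{1})$ where $(\mathbb{X},\oplus,\mathbb{0})$ is a commutative monoid with idempotent addition, $(\mathbb{X}\setminus\{\mathbb{0}\},\otimes,\mathbb{1})$ is an abelian group, and $\otimes$ distributes over $\oplus$; the product sign is omitted. The order is $x\le y$ iff $x\oplus y=y$, assumed linear; ''minimum'' refers to this order. Radicable means $x^m=a$ is solvable for all $a$ and integers $m\ge1$, so rational powers are defined. Matrix/vector operations use $\oplus,\otimes$; inequalities are entrywise. $\bm{I}$ is the identity matrix, $\bm{A}^0=\bm{I}$. A vector is regular if all entries are nonzero. For a nonzero vector $\bm{x}$ (row or column), $\bm{x}^{-}$ is the transposed vector with entries $x_i^{-1}$ if $x_i\ne\mathbb{0}$ and $\mathbb{0}$ otherwise. $\mathrm{tr}\,\bm{A}=a_{11}\oplus\cdots\oplus a_{nn}$; $\mathrm{Tr}(\bm{A})=\mathrm{tr}\,\bm{A}\oplus\cdots\oplus\mathrm{tr}\,\bm{A}^{n}$; $\bm{A}^{\ast}=\bm{I}\oplus\bm{A}\oplus\cdots\oplus\bm{A}^{n-1}$. For $k=1,\dots,n$, $\bm{S}_k=\bigoplus_{0\le i_1+\cdots+i_k\le n-k}\bm{A}\bm{B}^{i_1}\cdots\bm{A}\bm{B}^{i_k}$ (over nonnegative integers $i_j$); $\bm{T}_0=\bm{B}^{\ast}$ and, for $k=1,\dots,n-1$, $\bm{T}_k=\bigoplus_{0\le i_0+i_1+\cdots+i_k\le n-k-1}\bm{B}^{i_0}\bm{A}\bm{B}^{i_1}\cdots\bm{A}\bm{B}^{i_k}$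 (over nonnegative integers $i_j$). *)

From mathcomp Require Import all_boot.
Set Implicit Arguments.
Unset Strict Implicit.
Unset Printing Implicit Defensive.

Record lrisemifield := LRISemifield {
  carrier :> Type;
  sadd : carrier -> carrier -> carrier;
  smul : carrier -> carrier -> carrier;
  szero : carrier;
  sone : carrier;
  sinv : carrier -> carrier;   (* group inverse on nonzero elements; sinv 0 = 0 by convention *)
  sroot : nat -> carrier -> carrier;
  addA : forall x y z, sadd x (sadd y z) = sadd (sadd x y) z;
  addC : forall x y, sadd x y = sadd y x;
  add0x : forall x, sadd szero x = x;
  addxx : forall x, sadd x x = x;
  mulA : forall x y z, smul x (smul y z) = smul (smul x y) z;
  mulC : forall x y, smul x y = smul y x;
  mul1x : forall x, smul sone x = x;
  one_neq0 : sone <> szero;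
  mul_neq0 : forall x y, x <> szero -> y <> szero -> smul x y <> szero;
  mulVx : forall x, x <> szero -> smul (sinv x) x = sone;
  inv_neq0 : forall x, x <> szero -> sinv x <> szero;
  inv0 : sinv szero = szero;
  mul0x : forall x, smul szero x = szero;
  mulDr : forall x y z, smul x (sadd y z) = sadd (smul x y) (smul x z);
  (* the order x <= y iff x + y = y is linear *)
  add_total : forall x y, sadd x y = x \/ sadd x y = y;
  rootP : forall m a, 0 < m -> Nat.iter m (smul (sroot m a)) sone = a
}.

Section Defs.
Variable X : lrisemifield.
Variable n : nat.

Definition sle (x y : X) : Prop := sadd x y = y.
Definition slt (x y : X) : Prop := sle x y /\ x <> y.

Definition vec := 'I_n -> X.
Definition mat := 'I_n -> 'I_n -> X.

Definition vle (u v : vec) : Prop := forall i, sle (u i) (v i).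
Definition regular (x : vec) : Prop := forall i, x i <> szero X.

(* x^- : entrywise inverse (szero entries stay szero since sinv 0 = 0); we
   represent row vectors also as functions 'I_n -> X *)
Definition vinv (x : vec) : vec := fun i => sinv (x i).

Definition vdot (u x : vec) : X := \big[@sadd X/szero X]_(i < n) smul (u i) (x i).
Definition mvec (A : mat) (x : vec) : vec :=
  fun i => \big[@sadd X/szero X]_(j < n) smul (A i j) (x j).
Definition vmat (u : vec) (A : mat) : vec :=
  fun j => \big[@sadd X/szero X]_(i < n) smul (u i) (A i j).
Definition vscale (c : X) (x : vec) : vec := fun i => smul c (x i).

Definition mzero : mat := fun _ _ => szero X.
Definition mid : mat := fun i j => if i == j then sone X else szero X.
Definition madd (A B : mat) : mat := fun i j => sadd (A i j) (B i j).
Definition mmul (A B : mat) : mat :=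
  fun i j => \big[@sadd X/szero X]_(k < n) smul (A i k) (B k j).
Definition mscale (c : X) (A : mat) : mat := fun i j => smul c (A i j).
Definition mpow (A : mat) (k : nat) : mat := Nat.iter k (mmul A) mid.

Definition tr (A : mat) : X := \big[@sadd X/szero X]_(i < n) A i i.
Definition Tr (A : mat) : X := \big[@sadd X/szero X]_(k < n) tr (mpow A k.+1).
Definition star (A : mat) : mat := \big[madd/mzero]_(k < n) mpow A k.

Definition specrad (A : mat) : X :=
  \big[@sadd X/szero X]_(k < n) sroot k.+1 (tr (mpow A k.+1)).

(* S_k = sum over i_1+...+i_k <= n-k of A B^{i_1} ... A B^{i_k} *)
Definition Smat (A B : mat) (k : nat) : mat :=
  \big[madd/mzero]_(i : {ffun 'I_k -> 'I_(n - k).+1}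
                     | \sum_(j < k) (i j : nat) <= n - k)
     \big[mmul/mid]_(j < k) mmul A (mpow B (i j)).

(* T_0 = B^*, T_k = sum over i_0+...+i_k <= n-k-1 of
   B^{i_0} A B^{i_1} ... A B^{i_k} *)
Definition Tmat (A B : mat) (k : nat) : mat :=
  if k is 0 then star B else
  \big[madd/mzero]_(i : {ffun 'I_k.+1 -> 'I_(n - k)}
                     | \sum_(j < k.+1) (i j : nat) <= n - k - 1)
     mmul (mpow B (i ord0))
          (\big[mmul/mid]_(j < k) mmul A (mpow B (i (lift ord0 j)))).

Definition objective (A : mat) (p q : vec) (r : X) (x : vec) : X :=
  sadd (sadd (sadd (vdot (vinv x) (mvec A x)) (vdot (vinv x) p)) (vdot (vinv q) x)) r.

Definition theta (A B : mat) (p q : vec) (r : X) : X :=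
  sadd (sadd (\big[@sadd X/szero X]_(k < n) sroot k.+1 (tr (Smat A B k.+1)))
           (\big[@sadd X/szero X]_(k < n) sroot k.+2 (vdot (vinv q) (mvec (Tmat A B k) p))))
      r.

End Defs.

(* Unfolding the objective, objective(x) <= t says exactly that A x <= t x,
   p <= t x, q^- x <= t and r <= t.  Together with B x <= x this makes x a
   t^k-subeigenvector of every product A B^i1 ... A B^ik, so tr S_k <= t^k and
   q^- T_k p <= t^(k+2), whence theta <= t.
   Conversely, put C = theta^-1 A + B.  Splitting a closed walk of C of length
   at most n into A-steps and B-steps and rotating it bounds its weight by
   theta^-k tr S_k <= 1, or by a diagonal entry of a power of B, hence by
   Tr B <= 1.  All cycles of C thus weigh at most 1, so every power of C is
   dominated by M = C^*, and C (M u) <= M u.  This yields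
   objective(M u) <= theta whenever theta^-1 p <= u <= theta (q^- M)^-, an
   interval that is nonempty because q^- M p <= theta^2 (again from the walk
   expansion and q^- T_k p <= theta^(k+2)).  Finally an optimal x satisfies
   C x <= x, hence x = M x, and x lies in that interval. *)

From HB Require Import structures.
From Pilot Require Import Defs.
From mathcomp Require Import all_boot zify.
From Stdlib Require Import Classical FunctionalExtensionality.
Set Implicit Arguments. Unset Strict Implicit. Unset Printing Implicit Defensive.

Lemma nth_le_sumn (s : seq nat) j : nth 0 s j <= sumn s.
Proof.
elim: s j => [|e s IH] [|j] //=; first exact: leq_addr.
exact: leq_trans (IH j) (leq_addl _ _).
Qed.

Definition ffun_of_seq (s : seq nat) m (h : sumn s < m) k : {ffun 'I_k -> 'I_m} :=
  [ffun j : 'I_k => Ordinal (leq_ltn_trans (nth_le_sumn s j) h)].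

Lemma ffun_of_seqE s m (h : sumn s < m) k j : (ffun_of_seq h k j : nat) = nth 0 s j.
Proof. by rewrite ffunE. Qed.

Lemma sum_ffun_of_seq s m (h : sumn s < m) :
  \sum_(j < size s) (ffun_of_seq h (size s) j : nat) = sumn s.
Proof.
rewrite (eq_bigr (fun j : 'I_(size s) => nth 0 s j)) => [|j _]; last exact: ffun_of_seqE.
by rewrite sumnE (big_nth 0) big_mkord.
Qed.

Lemma size_uniq_ord n (s : seq 'I_n) : uniq s -> size s <= n.
Proof. by move/card_uniqP <-; rewrite -[n in _ <= n]card_ord max_card. Qed.

Lemma split_first_repeat (T : eqType) (s : seq T) : ~~ uniq s ->
  exists s1 x s2 s3, s = s1 ++ x :: s2 ++ x :: s3 /\ uniq (x :: s2).
Proof.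
elim: s => [|a s IH] //=; rewrite negb_and negbK.
case: (boolP (uniq s)) => [us | /IH [s1 [x [s2 [s3 [-> huniq]]]]] _]; last first.
  by exists (a :: s1), x, s2, s3.
rewrite orbF => a_in_s.
exists [::], a, (take (index a s) s), (drop (index a s).+1 s); split.
  by rewrite -[in LHS](cat_take_drop (index a s) s) (drop_index a_in_s).
by rewrite /= take_uniq // andbT in_take_leq ?index_size // ltnn.
Qed.

HB.instance Definition _ (X : lrisemifield) :=
  Monoid.isComLaw.Build (carrier X) (szero X) (@sadd X) (@addA X) (@addC X) (@add0x X).

Section Semifield.
Variable X : lrisemifield.
Local Notation "a ⊕ b" := (@sadd X a b) (at level 50, left associativity).
Local Notation "a ⊗ b" := (@smul X a b) (at level 40, left associativity).
Local Notation "a ≼ b" := (@sle X a b) (at level 70).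
Local Notation "𝟘" := (szero X).
Local Notation "𝟙" := (sone X).
Implicit Types a b t v w x y z : X.

Lemma lexx x : x ≼ x. Proof. exact: addxx. Qed.

Lemma le_trans y x z : x ≼ y -> y ≼ z -> x ≼ z.
Proof. by rewrite /sle => hxy hyz; rewrite -hyz addA hxy. Qed.

Lemma le_anti x y : x ≼ y -> y ≼ x -> x = y.
Proof. by rewrite /sle => hxy hyx; rewrite -hxy addC. Qed.

Lemma le0x x : 𝟘 ≼ x. Proof. exact: add0x. Qed.

Lemma le_eq0 x : x ≼ 𝟘 -> x = 𝟘. Proof. by move/le_anti; apply; apply: le0x. Qed.

Lemma neq0_ge x y : y <> 𝟘 -> y ≼ x -> x <> 𝟘.
Proof. by move=> hy hyx hx; apply/hy/le_eq0; rewrite -hx. Qed.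

Lemma le_total x y : x ≼ y \/ y ≼ x.
Proof. by rewrite /sle; case: (add_total x y) => h; [right; rewrite addC|left]. Qed.

Lemma le_addl x y : x ≼ x ⊕ y. Proof. by rewrite /sle addA addxx. Qed.

Lemma le_addr x y : y ≼ x ⊕ y. Proof. by rewrite addC; apply: le_addl. Qed.

Lemma add_le x y z : x ≼ z -> y ≼ z -> x ⊕ y ≼ z.
Proof. by rewrite /sle => hx hy; rewrite -addA hy hx. Qed.

Lemma add_leP x y z : x ⊕ y ≼ z <-> x ≼ z /\ y ≼ z.
Proof.
split=> [h | [hx hy]]; last exact: add_le.
by split; apply: le_trans h; [apply: le_addl | apply: le_addr].
Qed.

Lemma mulx0 x : x ⊗ 𝟘 = 𝟘. Proof. by rewrite mulC mul0x. Qed.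
Lemma mulx1 x : x ⊗ 𝟙 = x. Proof. by rewrite mulC mul1x. Qed.
Lemma mulxV x : x <> 𝟘 -> x ⊗ sinv x = 𝟙. Proof. by move=> hx; rewrite mulC mulVx. Qed.
Lemma mulDl x y z : (x ⊕ y) ⊗ z = x ⊗ z ⊕ y ⊗ z.
Proof. by rewrite mulC mulDr !(mulC z). Qed.
Lemma mulCA x y z : x ⊗ (y ⊗ z) = y ⊗ (x ⊗ z). Proof. by rewrite !mulA (mulC x). Qed.

Lemma le_mul2l z x y : x ≼ y -> z ⊗ x ≼ z ⊗ y.
Proof. by rewrite /sle => h; rewrite -mulDr h. Qed.

Lemma le_mul2r z x y : x ≼ y -> x ⊗ z ≼ y ⊗ z.
Proof. by rewrite !(mulC _ z); apply: le_mul2l. Qed.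

Lemma le_mul x x' y y' : x ≼ x' -> y ≼ y' -> x ⊗ y ≼ x' ⊗ y'.
Proof. by move=> hx hy; apply: le_trans (le_mul2r _ hx) (le_mul2l _ hy). Qed.

Lemma le_pmul2l z : z <> 𝟘 -> forall x y, z ⊗ x ≼ z ⊗ y <-> x ≼ y.
Proof.
move=> hz x y; split=> [h | ]; last exact: le_mul2l.
by have := le_mul2l (sinv z) h; rewrite !mulA mulVx // !mul1x.
Qed.

Lemma le_pmul2r z : z <> 𝟘 -> forall x y, x ⊗ z ≼ y ⊗ z <-> x ≼ y.
Proof. by move=> hz x y; rewrite !(mulC _ z); apply: le_pmul2l. Qed.

Lemma invmul_leP x : x <> 𝟘 -> forall a t, sinv x ⊗ a ≼ t <-> a ≼ t ⊗ x.
Proof.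
by move=> hx a t; rewrite -(le_pmul2l hx) mulA mulxV // mul1x (mulC x).
Qed.

Definition spow x k : X := Nat.iter k (smul x) 𝟙.

Lemma spowS x k : spow x k.+1 = x ⊗ spow x k. Proof. by []. Qed.

Lemma spow1 k : spow 𝟙 k = 𝟙.
Proof. by elim: k => // k IH; rewrite spowS IH mul1x. Qed.

Lemma spowM x y k : spow (x ⊗ y) k = spow x k ⊗ spow y k.
Proof.
elim: k => [|k IH]; first by rewrite /= mul1x.
by rewrite !spowS IH -!mulA (mulCA y).
Qed.

Lemma spowV x k : x <> 𝟘 -> spow (sinv x) k ⊗ spow x k = 𝟙.
Proof. by move=> hx; rewrite -spowM mulVx // spow1. Qed.

Lemma spow_neq0 x k : x <> 𝟘 -> spow x k <> 𝟘.
Proof. by move=> hx; elim: k => [|k IH]; [apply: one_neq0 | apply: mul_neq0]. Qed.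

Lemma le_spow k x y : x ≼ y -> spow x k ≼ spow y k.
Proof. by move=> h; elim: k => [|k IH]; [apply: lexx | apply: le_mul]. Qed.

Lemma spow_inj_le k x y : 0 < k -> x ≼ y -> spow x k = spow y k -> x = y.
Proof.
case: k => // k _ hxy heq.
case: (classic (y = 𝟘)) => [y0 | y0]; first by rewrite y0 in hxy *; apply: le_eq0.
have hcancel : x ⊗ spow y k = y ⊗ spow y k.
  apply: le_anti; first exact: le_mul2r.
  by rewrite -spowS -heq spowS; apply/le_mul2l/le_spow.
by apply: le_anti hxy _; rewrite -(le_pmul2r (spow_neq0 (k := k) y0)) hcancel; apply: lexx.
Qed.

Lemma spow_root k v : 0 < k -> spow (sroot k v) k = v.
Proof. exact: Defs.rootP. Qed.

Lemma root_leP k : 0 < k -> forall v t, sroot k v ≼ t <-> v ≼ spow t k.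
Proof.
move=> hk v t; have hroot : spow (sroot k v) k = v := spow_root v hk.
split=> [h | h]; first by rewrite -hroot; apply: le_spow.
case: (le_total (sroot k v) t) => // hle.
suff -> : t = sroot k v by apply: lexx.
apply: (spow_inj_le hk hle); apply: le_anti (le_spow k hle) _.
by rewrite hroot.
Qed.

Lemma big_le (I : Type) (r : seq I) (P : pred I) (F : I -> X) y :
  (forall i, P i -> F i ≼ y) -> \big[@sadd X/𝟘]_(i <- r | P i) F i ≼ y.
Proof.
by move=> h; apply: (big_ind (fun z => z ≼ y)) => //; [apply: le0x | move=> a b; apply: add_le].
Qed.

Lemma le_big_term (I : finType) (P : pred I) (F : I -> X) j :
  P j -> F j ≼ \big[@sadd X/𝟘]_(i | P i) F i.
Proof. by move=> hj; rewrite (bigD1 j) //=; apply: le_addl. Qed.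

Lemma le_big m (F : 'I_m -> X) a j :
  a ≼ F j -> a ≼ \big[@sadd X/𝟘]_(i < m) F i.
Proof. by move=> h; apply: le_trans h (le_big_term _ _). Qed.
Arguments le_big {m F a} j.

Lemma le_big_mono (I : finType) (P : pred I) (F G : I -> X) :
  (forall i, P i -> F i ≼ G i) ->
  \big[@sadd X/𝟘]_(i | P i) F i ≼ \big[@sadd X/𝟘]_(i | P i) G i.
Proof. by move=> h; apply: big_le => i hi; apply: le_trans (h i hi) (le_big_term _ hi). Qed.

Lemma mul_sumr (I : Type) (r : seq I) (P : pred I) (F : I -> X) a :
  a ⊗ \big[@sadd X/𝟘]_(i <- r | P i) F i = \big[@sadd X/𝟘]_(i <- r | P i) (a ⊗ F i).
Proof. by apply: (big_endo (smul a)); [apply: mulDr | apply: mulx0]. Qed.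

Lemma mul_suml (I : Type) (r : seq I) (P : pred I) (F : I -> X) a :
  (\big[@sadd X/𝟘]_(i <- r | P i) F i) ⊗ a = \big[@sadd X/𝟘]_(i <- r | P i) (F i ⊗ a).
Proof. by rewrite mulC mul_sumr; apply: eq_bigr => i _; rewrite mulC. Qed.

Lemma big_attained m (F : 'I_m -> X) : 0 < m ->
  exists k, \big[@sadd X/𝟘]_(k < m) F k = F k.
Proof.
elim: m F => // m IH F _; rewrite big_ord_recr /=.
case: m IH F => [|m] IH F; first by rewrite big_ord0 add0x; exists ord_max.
have [k ->] := IH (fun k => F (widen_ord (leqnSn _) k)) isT.
by case: (add_total (F (widen_ord (leqnSn m.+1) k)) (F ord_max)) => ->; eexists.
Qed.

Section Matrices.
Variable n : nat.
Local Notation mat := (mat X n).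
Local Notation vec := (vec X n).
Implicit Types (W : mat).

Lemma big_madd_entry (I : Type) (r : seq I) (P : pred I) (F : I -> mat) i j :
  (\big[@madd X n/@mzero X n]_(k <- r | P k) F k) i j =
  \big[@sadd X/𝟘]_(k <- r | P k) F k i j.
Proof. exact: (big_morph (fun W : mat => W i j)). Qed.

Lemma mmul1m W : mmul (@mid X n) W = W.
Proof.
apply: functional_extensionality => i; apply: functional_extensionality => j.
rewrite /mmul (bigD1 i) //= /mid eqxx mul1x big1 => [|k /negbTE hk]; first by rewrite addC add0x.
by rewrite eq_sym hk mul0x.
Qed.

Lemma mmulm1 W : mmul W (@mid X n) = W.
Proof.
apply: functional_extensionality => i; apply: functional_extensionality => j.
rewrite /mmul (bigD1 j) //= /mid eqxx mulx1 big1 => [|k /negbTE hk]; first by rewrite addC add0x.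
by rewrite hk mulx0.
Qed.

Lemma mmulA W1 W2 W3 : mmul (mmul W1 W2) W3 = mmul W1 (mmul W2 W3).
Proof.
apply: functional_extensionality => i; apply: functional_extensionality => j.
rewrite /mmul; under eq_bigr => k _ do rewrite mul_suml.
rewrite exchange_big /=; apply: eq_bigr => l _; rewrite mul_sumr.
by apply: eq_bigr => k _; rewrite mulA.
Qed.

Lemma mpowS W k : mpow W k.+1 = mmul W (mpow W k). Proof. by []. Qed.

Lemma mpowD W k l : mmul (mpow W k) (mpow W l) = mpow W (k + l).
Proof. by elim: k => [|k IH]; rewrite ?mmul1m // addSn /= mmulA IH. Qed.

Lemma mmul_term W1 W2 i k j : W1 i k ⊗ W2 k j ≼ mmul W1 W2 i j.
Proof. by apply: (le_big k); apply: lexx. Qed.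

Lemma mvec_term W (x : vec) i j : W i j ⊗ x j ≼ mvec W x i.
Proof. by apply: (le_big j); apply: lexx. Qed.

Lemma vdot_term (u x : vec) i : u i ⊗ x i ≼ vdot u x.
Proof. by apply: (le_big i); apply: lexx. Qed.

Lemma mvec_mmul W1 W2 (x : vec) i : mvec (mmul W1 W2) x i = mvec W1 (mvec W2 x) i.
Proof.
rewrite /mvec /mmul; under eq_bigr => j _ do rewrite mul_suml.
rewrite exchange_big /=; apply: eq_bigr => k _; rewrite mul_sumr.
by apply: eq_bigr => j _; rewrite mulA.
Qed.

Lemma le_mvec W (x y : vec) i : vle x y -> mvec W x i ≼ mvec W y i.
Proof. by move=> hxy; apply: le_big_mono => j _; apply: le_mul2l. Qed.

Lemma mvec_vscale W c (x : vec) i : mvec W (vscale c x) i = c ⊗ mvec W x i.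
Proof. by rewrite /mvec mul_sumr; apply: eq_bigr => j _; rewrite mulCA. Qed.

Lemma vdot_leP (u x : vec) t : vdot u x ≼ t <-> forall i, u i ⊗ x i ≼ t.
Proof.
split=> [h i | h]; last by apply: big_le => i _.
exact: le_trans (vdot_term u x i) h.
Qed.

Lemma vdot_inv_leP (x y : vec) t : regular x ->
  vdot (vinv x) y ≼ t <-> forall i, y i ≼ t ⊗ x i.
Proof.
move=> hx; rewrite vdot_leP.
by split=> h i; have := h i; rewrite /vinv invmul_leP.
Qed.

Lemma le_mvec_mat W1 W2 (x : vec) i :
  (forall j, W1 i j ≼ W2 i j) -> mvec W1 x i ≼ mvec W2 x i.
Proof. by move=> h; apply: le_big_mono => j _; apply: le_mul2r. Qed.

Lemma mvec_madd W1 W2 (x : vec) i : mvec (madd W1 W2) x i = mvec W1 x i ⊕ mvec W2 x i.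
Proof. by rewrite /mvec -big_split; apply: eq_bigr => j _; rewrite mulDl. Qed.

Lemma mvec_mscale W c (x : vec) i : mvec (mscale c W) x i = c ⊗ mvec W x i.
Proof. by rewrite /mvec mul_sumr; apply: eq_bigr => j _; rewrite mulA. Qed.

Lemma vdot_mvec (v : vec) W (x : vec) : vdot v (mvec W x) = vdot (vmat v W) x.
Proof.
rewrite /vdot /vmat; under eq_bigr => i _ do rewrite mul_sumr.
rewrite exchange_big /=; apply: eq_bigr => j _; rewrite mul_suml.
by apply: eq_bigr => i _; rewrite mulA.
Qed.

Lemma mmul_diag_le_tr W1 W2 i : mmul W1 W2 i i ≼ tr (mmul W2 W1).
Proof. by apply: big_le => k _; apply: (le_big k); rewrite mulC; apply: mmul_term. Qed.

Lemma mpow_diag_le_Tr W m i : 0 < m <= n -> mpow W m i i ≼ Tr W.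
Proof.
case: m => // m /= hm; apply: (le_big (Ordinal hm)).
by apply: (le_big i); apply: lexx.
Qed.

Lemma mpow_le_star W m i j : m < n -> mpow W m i j ≼ star W i j.
Proof.
by move=> hm; rewrite /star big_madd_entry; apply: (le_big (Ordinal hm)); apply: lexx.
Qed.

Lemma one_le_star W i : 𝟙 ≼ star W i i.
Proof.
have := mpow_le_star W i i (leq_ltn_trans (leq0n i) (ltn_ord i)).
by rewrite /= /mid eqxx.
Qed.

Lemma le_mvec_star W (x : vec) i : x i ≼ mvec (star W) x i.
Proof.
apply: le_trans (mvec_term _ _ i i).
by rewrite -{1}(mul1x (x i)); apply/le_mul2r/one_le_star.
Qed.

Definition subeigen W c (x : vec) := forall i, mvec W x i ≼ c ⊗ x i.

Lemma subeigen_mid (x : vec) : subeigen (@mid X n) 𝟙 x.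
Proof.
move=> i; rewrite mul1x; apply: big_le => j _; rewrite /mid.
by case: eqP => [<-|_]; rewrite ?mul1x ?mul0x; [apply: lexx | apply: le0x].
Qed.

Lemma subeigen_mmul W1 W2 a b (x : vec) :
  subeigen W1 a x -> subeigen W2 b x -> subeigen (mmul W1 W2) (a ⊗ b) x.
Proof.
move=> h1 h2 i; rewrite mvec_mmul.
apply: le_trans (le_mvec W1 (y := vscale b x) i h2) _.
by rewrite mvec_vscale (mulC a) -mulA; apply: le_mul2l.
Qed.

Lemma subeigen_big (I : Type) (r : seq I) (P : pred I) (F : I -> mat) c (x : vec) :
  (forall k, P k -> subeigen (F k) c x) ->
  subeigen (\big[@madd X n/@mzero X n]_(k <- r | P k) F k) c x.
Proof.
move=> h i; apply: big_le => j _; rewrite big_madd_entry mul_suml.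
by apply: big_le => k hk; apply: le_trans (h k hk i); apply: mvec_term.
Qed.

Lemma subeigen_mpow W c m (x : vec) : subeigen W c x -> subeigen (mpow W m) (spow c m) x.
Proof. by move=> h; elim: m => [|m IH]; [apply: subeigen_mid | apply: subeigen_mmul]. Qed.

Lemma subeigen_star W (x : vec) : subeigen W 𝟙 x -> subeigen (star W) 𝟙 x.
Proof. by move=> h; apply: subeigen_big => m _; rewrite -(spow1 m); apply: subeigen_mpow. Qed.

Lemma subeigen_entry W c (x : vec) i j : subeigen W c x -> W i j ⊗ x j ≼ c ⊗ x i.
Proof. by move=> h; apply: le_trans (h i); apply: mvec_term. Qed.

Lemma subeigen_diag W c (x : vec) : regular x -> subeigen W c x -> forall i, W i i ≼ c.
Proof. by move=> hx h i; apply/(le_pmul2r (hx i))/subeigen_entry. Qed.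

Section Alternating.
Variables A B : mat.

(* A B^e1 A B^e2 ... A B^ek for l = [:: e1; ...; ek]: the summands of S_k and,
   behind a leading power of B, of T_k. *)
Definition altprod (l : seq nat) : mat :=
  foldr (fun e W => mmul (mmul A (mpow B e)) W) (@mid X n) l.

Lemma altprod_nth (l : seq nat) (f : 'I_(size l) -> nat) :
  (forall j, f j = nth 0 l j) ->
  \big[@mmul X n/@mid X n]_(j < size l) mmul A (mpow B (f j)) = altprod l.
Proof.
elim: l f => [|e l IH] f hf; first by rewrite big_ord0.
by rewrite big_ord_recl hf /= (IH (fun j => f (lift ord0 j))) // => j; rewrite hf.
Qed.

Lemma altprod_rcons l e : altprod (rcons l e) = mmul (altprod l) (mmul A (mpow B e)).
Proof. by elim: l => [|e' l IH] /=; rewrite ?mmul1m ?mmulm1 // IH -mmulA. Qed.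

Lemma altprod_rcons_mpow l e f :
  mmul (altprod (rcons l e)) (mpow B f) = altprod (rcons l (e + f)).
Proof. by rewrite !altprod_rcons !mmulA mpowD. Qed.

Lemma altprod_nseq0 k : altprod (nseq k 0) = mpow A k.
Proof. by elim: k => //= k ->; rewrite mmulm1. Qed.

Lemma subeigen_prod_alt k (f : 'I_k -> nat) t (x : vec) :
  subeigen A t x -> subeigen B 𝟙 x ->
  subeigen (\big[@mmul X n/@mid X n]_(j < k) mmul A (mpow B (f j))) (spow t k) x.
Proof.
move=> hA hB; elim: k f => [|k IH] f; first by rewrite big_ord0; apply: subeigen_mid.
rewrite big_ord_recl spowS -{1}(mulx1 t); apply: subeigen_mmul (IH _).
by apply: subeigen_mmul hA _; rewrite -(spow1 (f ord0)); apply: subeigen_mpow.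
Qed.

Lemma subeigen_Smat k t (x : vec) :
  subeigen A t x -> subeigen B 𝟙 x -> subeigen (Smat A B k) (spow t k) x.
Proof. by move=> hA hB; apply: subeigen_big => f _; apply: subeigen_prod_alt. Qed.

Lemma subeigen_Tmat k t (x : vec) :
  subeigen A t x -> subeigen B 𝟙 x -> subeigen (Tmat A B k) (spow t k) x.
Proof.
move=> hA hB; case: k => [|k]; first exact: subeigen_star.
apply: subeigen_big => f _; rewrite -(mul1x (spow t k.+1)).
apply: subeigen_mmul; last exact: subeigen_prod_alt.
by rewrite -(spow1 (f ord0)); apply: subeigen_mpow.
Qed.

Lemma Smat_ge_altprod l i j : sumn l + size l <= n ->
  altprod l i j ≼ Smat A B (size l) i j.
Proof.
move=> hl; have hsum : sumn l < (n - size l).+1 by lia.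
pose f := ffun_of_seq hsum (size l).
have hf : \sum_(j < size l) (f j : nat) <= n - size l by rewrite sum_ffun_of_seq; lia.
rewrite /Smat big_madd_entry -(@altprod_nth l (fun j => f j)) => [|k]; last exact: ffun_of_seqE.
exact: (le_big_term _ hf).
Qed.

Lemma Tmat_ge_altprod i0 l i j : i0 + sumn l + size l < n ->
  mmul (mpow B i0) (altprod l) i j ≼ Tmat A B (size l) i j.
Proof.
case: l => [|e l] hl.
  rewrite mmulm1 /= /star big_madd_entry; rewrite !addn0 in hl.
  by apply: (le_big (Ordinal hl)); apply: lexx.
have hsum : sumn (i0 :: e :: l) < n - (size l).+1 by move: hl => /=; lia.
pose f := ffun_of_seq hsum (size l).+2.
have hf : \sum_(j < (size l).+2) (f j : nat) <= n - (size l).+1 - 1.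
  by rewrite (sum_ffun_of_seq hsum); lia.
rewrite -(@altprod_nth (e :: l) (fun j => f (lift ord0 j))) => [|k]; last by rewrite ffun_of_seqE.
rewrite /Tmat /= big_madd_entry.
by apply: le_trans (le_big_term _ hf); rewrite ffun_of_seqE; apply: lexx.
Qed.

(* A walk in c A + B takes A-steps (weight c) and B-steps; grouping the B-steps
   bounds its weight by c^k times an entry of B^i0 A B^e1 ... A B^ek. *)
Lemma mpow_pencil_le c m i j : exists i0 l, i0 + sumn l + size l = m /\
  mpow (madd (mscale c A) B) m i j ≼ spow c (size l) ⊗ mmul (mpow B i0) (altprod l) i j.
Proof.
have hn : 0 < n := leq_ltn_trans (leq0n i) (ltn_ord i).
elim: m i j => [|m IH] i j.
  exists 0%N, [::]; split=> //.
  by rewrite -[spow c 0]/𝟙 mul1x -[mpow B 0]/(@mid X n) mmul1m; apply: lexx.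
set C := madd (mscale c A) B.
have [k hk] := big_attained (fun k => C i k ⊗ mpow C m k j) hn.
rewrite mpowS [mmul _ _ i j]hk; have [i0 [l [hsize hle]]] := IH k j.
have [->|->] : C i k = c ⊗ A i k \/ C i k = B i k := add_total _ _.
- exists 0%N, (i0 :: l); split; first by rewrite /=; lia.
  rewrite -[mpow B 0]/(@mid X n) mmul1m -[size _]/(size l).+1 spowS [altprod _]/= mmulA.
  apply: le_trans (le_mul2l _ hle) _.
  by rewrite -!mulA; apply: le_mul2l; rewrite mulCA; apply/le_mul2l/mmul_term.
- exists i0.+1, l; split; first by lia.
  rewrite mpowS mmulA; apply: le_trans (le_mul2l _ hle) _.
  by rewrite mulCA; apply/le_mul2l/mmul_term.
Qed.

End Alternating.

Section Objective.
Variables (A B : mat) (p q : vec) (r : X).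

Lemma objective_leP (x : vec) t : regular x ->
  objective A p q r x ≼ t <->
  [/\ subeigen A t x, vle p (vscale t x), vdot (vinv q) x ≼ t & r ≼ t].
Proof.
move=> hx; rewrite /objective !add_leP !(vdot_inv_leP _ _ hx).
by split=> [[[[? ?] ?] ?] | [? ? ? ?]].
Qed.

Lemma theta_le (x : vec) t : regular x -> subeigen A t x -> subeigen B 𝟙 x ->
  vle p (vscale t x) -> vdot (vinv q) x ≼ t -> r ≼ t -> theta A B p q r ≼ t.
Proof.
move=> hx hA hB hp hq hr; apply: add_le hr; apply: add_le; apply: big_le => k _.
  apply/(root_leP (ltn0Sn _)); apply: big_le => i _.
  exact: subeigen_diag hx (subeigen_Smat _ hA hB) i.
apply/(root_leP (ltn0Sn _)); apply/vdot_leP => i.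
have hTp : mvec (Tmat A B k) p i ≼ spow t k.+1 ⊗ x i.
  apply: le_trans (le_mvec _ i hp) _.
  by rewrite mvec_vscale spowS -mulA; apply/le_mul2l/subeigen_Tmat.
apply: le_trans (le_mul2l _ hTp) _.
by rewrite mulCA (spowS t k.+1) (mulC t); apply/le_mul2l/(vdot_leP _ _ _).1.
Qed.

Lemma theta_le_objective (x : vec) : regular x -> vle (mvec B x) x ->
  theta A B p q r ≼ objective A p q r x.
Proof.
move=> hx hBx; have [hA hp hq hr] := (objective_leP _ hx).1 (lexx _).
by apply: theta_le hx hA _ hp hq hr => i; rewrite mul1x.
Qed.

End Objective.

Section Paths.
Variable C : mat.
Hypothesis cycle_le1 : forall m i, 0 < m <= n -> mpow C m i i ≼ 𝟙.

Fixpoint path_weight (s : seq 'I_n) : X :=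
  if s is i :: (j :: _) as t then C i j ⊗ path_weight t else 𝟙.

Lemma path_weight_le_mpow s i : path_weight (i :: s) ≼ mpow C (size s) i (last i s).
Proof.
elim: s i => [|j s IH] i /=; first by rewrite /mid eqxx; apply: lexx.
by apply: le_trans (le_mul2l _ (IH j)) _; apply: mmul_term.
Qed.

Lemma path_weight_cat s1 (x : 'I_n) s2 :
  path_weight (s1 ++ x :: s2) = path_weight (rcons s1 x) ⊗ path_weight (x :: s2).
Proof.
elim: s1 => [|i [|j s1] IH] /=; rewrite ?mul1x ?mulx1 //.
by rewrite -mulA -IH.
Qed.

Lemma mpow_path m i j : mpow C m i j = 𝟘 \/
  exists s, [/\ size s = m, last i s = j & mpow C m i j ≼ path_weight (i :: s)].
Proof.
have hn : 0 < n := leq_ltn_trans (leq0n i) (ltn_ord i).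
elim: m i => [|m IH] i.
  rewrite /= /mid; case: eqP => [<-|_]; last by left.
  by right; exists [::]; split=> //; apply: lexx.
have [k hk] := big_attained (fun k => C i k ⊗ mpow C m k j) hn.
rewrite mpowS [mmul _ _ i j]hk.
case: (IH k) => [-> | [s [hs hl hw]]]; first by left; rewrite mulx0.
by right; exists (k :: s); split; rewrite /= ?hs //; apply: le_mul2l.
Qed.

(* A walk with more than n edges repeats a vertex; cutting out its first simple
   cycle, of weight at most 1, shortens it without decreasing its weight. *)
Lemma path_weight_le_star s d : 0 < size s ->
  path_weight s ≼ star C (head d s) (last d s).
Proof.
have [N] := ubnP (size s); elim: N s => // N IH s hsN hs0.
case: (ltnP (size s) n.+1) => hsn.
  case: s hs0 hsn {hsN} => // i s _ hsn.
  exact: le_trans (path_weight_le_mpow s i) (mpow_le_star _ _ _ hsn).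
have /split_first_repeat [s1 [x [s2 [s3 [hs huniq]]]]] : ~~ uniq s.
  by apply: contraTN hsn => /size_uniq_ord; rewrite -leqNgt.
have hcycle : path_weight (x :: rcons s2 x) ≼ 𝟙.
  apply: le_trans (path_weight_le_mpow _ _) _; rewrite last_rcons size_rcons.
  by apply: cycle_le1; rewrite ltn0Sn; apply: size_uniq_ord huniq.
have hshort : path_weight s ≼ path_weight (s1 ++ x :: s3).
  rewrite hs !path_weight_cat -cat_cons path_weight_cat rcons_cons.
  apply: le_mul2l; rewrite -{2}(mul1x (path_weight (x :: s3))); exact: le_mul2r.
have hsize : size (s1 ++ x :: s3) < size s.
  by rewrite hs !size_cat /= size_cat ltn_add2l ltnS leq_addl.
have -> : head d s = head d (s1 ++ x :: s3) by rewrite hs; case: s1 {hs hshort hsize}.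
have -> : last d s = last d (s1 ++ x :: s3) by rewrite hs !last_cat /= last_cat.
by apply: le_trans hshort (IH _ (leq_trans hsize hsN) _); rewrite size_cat addnS.
Qed.

Lemma mpow_le_star_cycles m i j : mpow C m i j ≼ star C i j.
Proof.
case: (mpow_path m i j) => [-> | [s [_ <- hw]]]; first exact: le0x.
exact: le_trans hw (path_weight_le_star i (isT : 0 < size (i :: s))).
Qed.

End Paths.

Section Optimum.
Variables (A B : mat) (p q : vec) (r : X).
Hypothesis hn : 0 < n.
Hypothesis hB : Tr B ≼ 𝟙.
Hypothesis hq : regular q.
Hypothesis hpos : slt 𝟘 (specrad A ⊕ sroot 2 (vdot (vinv q) p) ⊕ r).

Local Notation th := (theta A B p q r).
Local Notation C := (madd (mscale (sinv th) A) B).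
Local Notation M := (star C).
Local Notation qM := (vmat (vinv q) M).

Lemma tr_Smat_le_theta k : 0 < k <= n -> tr (Smat A B k) ≼ spow th k.
Proof.
case: k => // k /= hk; rewrite -(root_leP (ltn0Sn _)).
rewrite /theta; apply: le_trans _ (le_addl _ r); apply: le_trans _ (le_addl _ _).
by apply: (le_big (Ordinal hk)); apply: lexx.
Qed.

Lemma qTp_le_theta k : k < n -> vdot (vinv q) (mvec (Tmat A B k) p) ≼ spow th k.+2.
Proof.
move=> hk; rewrite -(root_leP (ltn0Sn _)).
rewrite /theta; apply: le_trans _ (le_addl _ r); apply: le_trans _ (le_addr _ _).
by apply: (le_big (Ordinal hk)); apply: lexx.
Qed.

Lemma specrad_le_theta : specrad A ≼ th.
Proof.
apply: big_le => k _; apply/(root_leP (ltn0Sn _)).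
apply: le_trans _ (tr_Smat_le_theta _); last by rewrite ltn0Sn ltn_ord.
apply: le_big_mono => i _; rewrite -(altprod_nseq0 A B).
have := @Smat_ge_altprod A B (nseq k.+1 0) i i.
by rewrite size_nseq sumn_nseq mul0n add0n; apply; apply: ltn_ord.
Qed.

Lemma sqrt_qp_le_theta : sroot 2 (vdot (vinv q) p) ≼ th.
Proof.
apply/(root_leP (ltn0Sn _)); apply: le_trans _ (qTp_le_theta hn).
by apply: le_big_mono => i _; apply/le_mul2l/le_mvec_star.
Qed.

Lemma theta_neq0 : th <> 𝟘.
Proof.
case: hpos => _ hne; apply: neq0_ge (not_eq_sym hne) _.
apply: add_le; last exact: le_addr.
by apply: add_le; [apply: specrad_le_theta | apply: sqrt_qp_le_theta].
Qed.

(* Rotating a closed walk moves its leading B^i0 to the end, where it merges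
   into a summand of S_k. *)
Lemma pencil_cycle_le1 m i : 0 < m <= n -> mpow C m i i ≼ 𝟙.
Proof.
move=> hm; have [i0 [l [hsize hle]]] := mpow_pencil_le A B (sinv th) m i i.
apply: le_trans hle _; case/lastP: l hsize => [|l e] hsize.
  rewrite /= !addn0 in hsize; subst m; rewrite mmulm1 -[spow _ 0]/𝟙 mul1x.
  exact: le_trans (mpow_diag_le_Tr B i hm) hB.
rewrite sumn_rcons size_rcons in hsize.
apply: le_trans (le_mul2l _ (mmul_diag_le_tr _ _ i)) _.
rewrite altprod_rcons_mpow.
have htr : tr (altprod A B (rcons l (e + i0))) ≼ spow th (size l).+1.
  rewrite -(size_rcons l (e + i0)).
  apply: le_trans _ (tr_Smat_le_theta _); last by rewrite size_rcons; lia.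
  by apply: le_big_mono => j _; apply: Smat_ge_altprod; rewrite sumn_rcons size_rcons; lia.
apply: le_trans (le_mul2l _ htr) _.
by rewrite size_rcons spowV; [apply: lexx | apply: theta_neq0].
Qed.

Lemma mmul_pencil_star_le i j : mmul C M i j ≼ M i j.
Proof.
apply: big_le => k _; rewrite {1}/star big_madd_entry mul_sumr; apply: big_le => m _.
exact: le_trans (mmul_term C (mpow C m) i k j) (mpow_le_star_cycles pencil_cycle_le1 m.+1 i j).
Qed.

Lemma qMp_entry_le i j : sinv (q i) ⊗ M i j ⊗ p j ≼ th ⊗ th.
Proof.
rewrite /star big_madd_entry mul_sumr mul_suml; apply: big_le => m _.
have [i0 [l [hsize hle]]] := mpow_pencil_le A B (sinv th) m i j.
have hl : i0 + sumn l + size l < n by rewrite hsize.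
have hT : sinv (q i) ⊗ Tmat A B (size l) i j ⊗ p j ≼ spow th (size l).+2.
  apply: le_trans _ (qTp_le_theta _); last lia.
  by rewrite -mulA; apply: (le_big i); apply/le_mul2l/mvec_term.
have hTl := le_trans hle (le_mul2l _ (@Tmat_ge_altprod A B i0 l i j hl)).
apply: le_trans (le_mul2r _ (le_mul2l _ hTl)) _.
rewrite mulCA -mulA; apply: le_trans (le_mul2l _ hT) _.
rewrite !spowS mulCA (mulCA (spow _ _)) spowV ?mulx1; [apply: lexx | apply: theta_neq0].
Qed.

Lemma qM_neq0 j : qM j <> 𝟘.
Proof.
have hqj : sinv (q j) ≼ qM j.
  by apply: (le_big j); rewrite -{1}(mulx1 (sinv (q j))); apply/le_mul2l/one_le_star.
exact: neq0_ge (inv_neq0 (@hq j)) hqj.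
Qed.
Arguments qM_neq0 : clear implicits.

Lemma star_pencil_subeigen (u : vec) : subeigen C 𝟙 (mvec M u).
Proof.
by move=> i; rewrite mul1x -mvec_mmul; apply: le_mvec_mat => j; apply: mmul_pencil_star_le.
Qed.

Lemma optimal_of_bounds (u : vec) : regular (mvec M u) ->
  vle (vscale (sinv th) p) u -> vle u (vscale th (vinv qM)) ->
  vle (mvec B (mvec M u)) (mvec M u) /\ objective A p q r (mvec M u) = th.
Proof.
move=> hx hpu huq; set x := mvec M u.
have hCx i : mvec C x i ≼ x i by rewrite -[x i]mul1x; apply: star_pencil_subeigen.
have hBx : vle (mvec B x) x by move=> i; apply: le_trans (hCx i); rewrite mvec_madd; apply: le_addr.
split=> //; apply: le_anti _ (theta_le_objective A p q r hx hBx).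
apply/(objective_leP A p q r _ hx); split.
- move=> i; rewrite -[mvec A x i]mul1x -(mulxV theta_neq0) -mulA -mvec_mscale.
  by apply/le_mul2l; apply: le_trans (hCx i); rewrite mvec_madd; apply: le_addl.
- move=> i; apply: le_trans (le_mul2l th (le_mvec_star _ u i)).
  by rewrite -[p i]mul1x -(mulxV theta_neq0) -mulA; apply/le_mul2l/hpu.
- rewrite /x vdot_mvec; apply/vdot_leP => j.
  apply: le_trans (le_mul2l _ (huq j)) _.
  by rewrite mulCA mulxV ?mulx1; [apply: lexx | apply: qM_neq0].
- exact: le_addr.
Qed.

Lemma bounds_of_optimal (x : vec) : regular x -> vle (mvec B x) x -> objective A p q r x = th ->
  [/\ vle (vscale (sinv th) p) x, vle x (vscale th (vinv qM)) & x = mvec M x].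
Proof.
move=> hx hBx hobj.
have [hA hp hqx _] : [/\ subeigen A th x, vle p (vscale th x), vdot (vinv q) x ≼ th & r ≼ th].
  by apply/(objective_leP A p q r _ hx); rewrite hobj; apply: lexx.
have hCx : subeigen C 𝟙 x.
  move=> i; rewrite mul1x mvec_madd mvec_mscale; apply: add_le (hBx i).
  by rewrite -[x i]mul1x -(mulVx theta_neq0) -mulA; apply/le_mul2l/hA.
have hMx : x = mvec M x.
  apply: functional_extensionality => i; apply: le_anti (le_mvec_star _ _ i) _.
  by rewrite -[x i]mul1x; apply: subeigen_star.
split; last exact: hMx.
- by move=> i; rewrite /vscale -[x i]mul1x -(mulVx theta_neq0) -mulA; apply/le_mul2l/hp.
- move=> j; rewrite /vscale -(le_pmul2l (qM_neq0 j)) mulCA mulxV ?mulx1; last exact: qM_neq0.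
  by move: hqx; rewrite {1}hMx vdot_mvec; apply: le_trans; apply: vdot_term.
Qed.

Lemma optimum_attained : exists x : vec,
  regular x /\ vle (mvec B x) x /\ objective A p q r x = th.
Proof.
pose u := vscale th (vinv qM).
have hu : regular u by move=> j; apply: mul_neq0 theta_neq0 (inv_neq0 (qM_neq0 j)).
have hx : regular (mvec M u) by move=> i; apply: neq0_ge (hu i) (le_mvec_star _ _ i).
have hpu : vle (vscale (sinv th) p) u.
  move=> j; rewrite /u /vscale -(le_pmul2l (qM_neq0 j)) mulCA (mulCA (qM j)) mulxV ?mulx1;
    last exact: qM_neq0.
  have hqp : qM j ⊗ p j ≼ th ⊗ th.
    by rewrite /vmat mul_suml; apply: big_le => i _; apply: qMp_entry_le.
  apply: le_trans (le_mul2l _ hqp) _.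
  by rewrite mulA mulVx ?mul1x; [apply: lexx | apply: theta_neq0].
have [hBx hobj] := optimal_of_bounds hx hpu (fun j => lexx (u j)).
by exists (mvec M u).
Qed.

End Optimum.
End Matrices.
End Semifield.

Theorem corollary2 (X : lrisemifield) (n : nat) (hn : 0 < n)
  (A B : mat X n) (p q : vec X n) (r : X)
  (hB : sle (Tr B) (sone X))
  (hq : regular q)
  (hpos : slt (szero X)
            (sadd (sadd (specrad A) (sroot 2 (vdot (vinv q) p))) r)) :
  let th := theta A B p q r in
  let M := star (madd (mscale (sinv th) A) B) in
  (exists x : vec X n, regular x /\ vle (mvec B x) x /\ objective A p q r x = th) /\
  (forall x : vec X n, regular x -> vle (mvec B x) x ->
     sle th (objective A p q r x)) /\
  (forall x : vec X n, regular x ->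
     ((vle (mvec B x) x /\ objective A p q r x = th) <->
      exists u : vec X n,
        vle (vscale (sinv th) p) u /\
        vle u (vscale th (vinv (vmat (vinv q) M))) /\
        x = mvec M u)).
Proof.
move=> th M; split; [|split].
- exact: optimum_attained hn hB hq hpos.
- by move=> x hx hBx; apply: theta_le_objective.
- move=> x hx; split=> [[hBx hobj] | [u [hpu [huq hxu]]]].
    by have [hpx hxq hMx] := bounds_of_optimal hn hq hpos hx hBx hobj; exists x.
  by rewrite hxu in hx *; exact: (optimal_of_bounds hn hB hq hpos hx hpu huq).
Qed.
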